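(* Let $(N,+,* )$ be a nilpotent ring with adjoint operation $x\circ y=x+y+x*y$, let $S$ be a subring and $I$ a two-sided ideal of $N$ with $S\cap I=\{0\}$ and $N=S+I$. Then every $x\in N$ can be written uniquely as $x=s\circ i$ with $s\in S$, $i\in I$; define $x\bullet y=s\circ y\circ i$, so that $(N,+,\bullet)$ is a left brace, and let $r$ be its Yang–Baxter map. Let $X\subseteq N$ be such that $(X,r)$ is a solution of the set-theoretic Yang–Baxter equation, and let $J\subseteq I\cap X$ be a two-sided ideal of the ring $N$. Let $k:X\to X$ satisfy, for every $x\in X$: $k(x+j)=k(x)$ whenever $j\in J$ and $x+j\in X$; $k(x)-x\in J$; and $b\bullet k(x)=k(x)+b$ for all $b\in N$. Then $k$ is a reflection of $(X,r)$.
   Context: A (left) brace is a triple $(B,+,\circ)$ with $(B,+)$ abelian group, $(B,\circ)$ group, and $x\circ(y+z)=x\circ y+x\circ z-x$. The Yang–Baxter map of the brace $(N,+,\bullet)$ is $r(x,y)=(\sigma_x(y),\tau_y(x))$ with $\sigma_x(y)=x\bullet y-x$ and $\tau_y(x)=(\sigma_x(y))^{-1}\bullet x-(\sigma_x(y))^{-1}$, inverses taken in $(N,\bullet)$. For $X\subseteq N$, $(X,r)$ is a solution of the set-theoretic Yang–Baxter equation if $r(X\times X)\subseteq X\times X$ and $(\mathrm{id}\times r)(r\times\mathrm{id})(\mathrm{id}\times r)=(r\times\mathrm{id})(\mathrm{id}\times r)(r\times\mathrm{id})$ on $X^3$. A map $k:X\to X$ is a reflection of $(X,r)$ if $r(\mathrm{id}\times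 k)r(\mathrm{id}\times k)=(\mathrm{id}\times k)r(\mathrm{id}\times k)r$ on $X\times X$. *)

(* A nilpotent ring is a (non-unital) ring structure on an
   abelian group N : zmodType given by an explicit multiplication [mul]. *)
From HB Require Import structures.
From mathcomp Require Import all_boot all_order all_algebra.
From Stdlib Require Import ClassicalEpsilon.
Set Implicit Arguments. Unset Strict Implicit. Unset Printing Implicit Defensive.
Import GRing.Theory.
Local Open Scope ring_scope.

Section Defs.
Variable N : zmodType.
Implicit Types (mul : N -> N -> N) (P S I J X : N -> Prop).

Fixpoint nprod mul (x : N) (s : seq N) : N :=
  match s with [::] => x | y :: s' => mul x (nprod mul y s') end.

Definition nilpotent_ring mul : Prop :=
  [/\ (forall x y z, mul x (mul y z) = mul (mul x y) z),
      (forall x y z, mul x (y + z) = mul x y + mul x z),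
      (forall x y z, mul (x + y) z = mul x z + mul y z) &
      exists n : nat, forall x s, size s = n -> nprod mul x s = 0].

Definition additive_subgroup P : Prop :=
  [/\ P 0, (forall x y, P x -> P y -> P (x + y)) & (forall x, P x -> P (- x))].

Definition subring mul S : Prop :=
  additive_subgroup S /\ (forall x y, S x -> S y -> S (mul x y)).

Definition two_sided_ideal mul I : Prop :=
  [/\ additive_subgroup I, (forall x y, I y -> I (mul x y))
                         & (forall x y, I x -> I (mul x y))].

Definition adj mul (x y : N) : N := x + y + mul x y.

Definition sdecomp mul S I (x : N) : N * N :=
  epsilon (inhabits (0, 0))
    (fun p => [/\ S p.1, I p.2 & x = adj mul p.1 p.2]).

Definition bullet mul S I (x y : N) : N :=
  let p := sdecomp mul S I x in adj mul (adj mul p.1 y) p.2.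

Definition left_brace (op : N -> N -> N) : Prop :=
  [/\ (forall x y z, op x (op y z) = op (op x y) z),
      (exists e, (forall x, op e x = x /\ op x e = x) /\
                 (forall x, exists y, op x y = e /\ op y x = e)) &
      (forall x y z, op x (y + z) = op x y + op x z - x)].

(* inverse in the group (N, op) (whose neutral element is 0 for a brace) *)
Definition ginv (op : N -> N -> N) (x : N) : N :=
  epsilon (inhabits 0) (fun y => op x y = 0 /\ op y x = 0).

Definition ybe_sigma (op : N -> N -> N) (x y : N) : N := op x y - x.
Definition ybe_tau (op : N -> N -> N) (y x : N) : N :=
  let u := ginv op (ybe_sigma op x y) in op u x - u.

Definition ybe_map (op : N -> N -> N) (p : N * N) : N * N :=
  (ybe_sigma op p.1 p.2, ybe_tau op p.2 p.1).

Definition r12 (r : N * N -> N * N) (t : N * N * N) : N * N * N :=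
  let p := r (t.1.1, t.1.2) in (p.1, p.2, t.2).
Definition r23 (r : N * N -> N * N) (t : N * N * N) : N * N * N :=
  let p := r (t.1.2, t.2) in (t.1.1, p.1, p.2).

Definition ybe_solution (r : N * N -> N * N) X : Prop :=
  (forall x y, X x -> X y -> X (r (x, y)).1 /\ X (r (x, y)).2) /\
  (forall x y z, X x -> X y -> X z ->
     r23 r (r12 r (r23 r (x, y, z))) = r12 r (r23 r (r12 r (x, y, z)))).

Definition idk (k : N -> N) (p : N * N) : N * N := (p.1, k p.2).

(* k is a reflection of (X, r):  r(id x k) r(id x k) = (id x k) r (id x k) r
   on X x X (compositions read right-to-left) *)
Definition reflection (r : N * N -> N * N) X (k : N -> N) : Prop :=
  forall x y, X x -> X y ->
    r (idk k (r (idk k (x, y)))) = idk k (r (idk k (r (x, y)))).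

End Defs.

(* Nilpotency makes (N, o) a group, the inverse of x being the finite series
   -x + x^2 - x^3 + ...; S and I are subgroups of it with S o I = N and trivial
   intersection, which gives the unique factorisation x = s o i.  The brace
   axioms for x . y = s o y o i then reduce to the associativity of o and to
   x o (y + z) = x o y + x o z - x.
   Since J is a ring ideal contained in I, congruence modulo J is compatible
   with ., hence with the brace inverse and with both components sigma, tau of
   r.  The hypothesis b . k(x) = k(x) + b says that k(x) is fixed by every
   lambda_b, so sigma_a(k z) = k z and tau_(k z)(k w) = k w.  Both sides of the
   reflection equation therefore collapse to pairs of values of k at points
   congruent modulo J (for the second coordinate by the involutivity of r), and
   k is constant on such classes. *)

From Pilot Require Import Defs.
From mathcomp Require Import all_boot all_order all_algebra.
From Stdlib Require Import ClassicalEpsilon.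
Import GRing.Theory.
Local Open Scope ring_scope.
Set Implicit Arguments. Unset Strict Implicit.

Section Substructures.
Variable N : zmodType.
Implicit Types (mul : N -> N -> N) (P : N -> Prop).

Definition compatible P (op : N -> N -> N) : Prop :=
  forall a a' z z', P (a - a') -> P (z - z') -> P (op a z - op a' z').

Lemma subgroup0 P : additive_subgroup P -> P 0.
Proof. by case. Qed.

Lemma subgroupD P x y : additive_subgroup P -> P x -> P y -> P (x + y).
Proof. by case=> _ + _; apply. Qed.

Lemma subgroupN P x : additive_subgroup P -> P x -> P (- x).
Proof. by case=> _ _; apply. Qed.

Lemma subgroupB P x y : additive_subgroup P -> P x -> P y -> P (x - y).
Proof. by move=> P_sub Px Py; exact: subgroupD P_sub Px (subgroupN P_sub Py). Qed.

Lemma ideal_subgroup mul P : two_sided_ideal mul P -> additive_subgroup P.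
Proof. by case. Qed.

Lemma idealMl mul P x y : two_sided_ideal mul P -> P y -> P (mul x y).
Proof. by case=> _ + _; apply. Qed.

Lemma idealMr mul P x y : two_sided_ideal mul P -> P x -> P (mul x y).
Proof. by case=> _ _; apply. Qed.

End Substructures.

Section AdjointOperation.
Variables (N : zmodType) (mul : N -> N -> N).
Hypothesis mulA : forall x y z, mul x (mul y z) = mul (mul x y) z.
Hypothesis mulDr : forall x y z, mul x (y + z) = mul x y + mul x z.
Hypothesis mulDl : forall x y z, mul (x + y) z = mul x z + mul y z.
Local Notation adj := (adj mul).

Lemma mul0x x : mul 0 x = 0.
Proof. by apply: (@addrI _ (mul 0 x)); rewrite -mulDl !addr0. Qed.

Lemma mulx0 x : mul x 0 = 0.
Proof. by apply: (@addrI _ (mul x 0)); rewrite -mulDr !addr0. Qed.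

Lemma mulNx x y : mul (- x) y = - mul x y.
Proof. by apply: (@addrI _ (mul x y)); rewrite -mulDl !subrr mul0x. Qed.

Lemma mulxN x y : mul x (- y) = - mul x y.
Proof. by apply: (@addrI _ (mul x y)); rewrite -mulDr !subrr mulx0. Qed.

Lemma mulBx x y z : mul (x - y) z = mul x z - mul y z.
Proof. by rewrite mulDl mulNx. Qed.

Lemma mulxB x y z : mul x (y - z) = mul x y - mul x z.
Proof. by rewrite mulDr mulxN. Qed.

Lemma adj0x x : adj 0 x = x.
Proof. by rewrite /adj mul0x add0r addr0. Qed.

Lemma adjx0 x : adj x 0 = x.
Proof. by rewrite /adj mulx0 !addr0. Qed.

Lemma adjA x y z : adj x (adj y z) = adj (adj x y) z.
Proof. by rewrite /adj !mulDr !mulDl !mulA !addrA; rewrite [LHS](ACl (1*2*5*3*6*4*7)). Qed.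

Lemma adjDr a y z : adj a (y + z) = adj a y + adj a z - a.
Proof.
by rewrite /adj mulDr !addrA [RHS](@GRing.add N).[ACl ((1*2*5*3*6)*(4*7))] subrr addr0.
Qed.

Lemma adjDBl u v w b : adj (u + v - w) b = adj u b + adj v b - adj w b.
Proof.
rewrite /adj !mulDl mulNx !opprD !addrA.
by rewrite [RHS](@GRing.add N).[ACl ((1*4*7*2*3*6*9)*(5*8))] subrr addr0.
Qed.

Lemma adj_compat J : two_sided_ideal mul J -> compatible J adj.
Proof.
move=> J_ideal a a' b b' Ja Jb; have J_sub := ideal_subgroup J_ideal.
have mul_diff : mul a b - mul a' b' = mul (a - a') b + mul a' (b - b').
  by rewrite mulBx mulxB addrA subrK.
rewrite /adj opprD addrACA mul_diff opprD [X in X + _]addrACA.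
apply: (subgroupD J_sub); first exact: subgroupD J_sub Ja Jb.
by apply: (subgroupD J_sub); [exact: idealMr J_ideal Ja | exact: idealMl J_ideal Jb].
Qed.

Section QuasiInverse.
Variable n : nat.
Hypothesis mul_nilpotent : forall x s, size s = n -> nprod mul x s = 0.

Fixpoint qinv_iter (x : N) (m : nat) : N :=
  if m is m'.+1 then - x - mul x (qinv_iter x m') else 0.

Definition qinv x := qinv_iter x n.

Lemma adj_qinv_iter x m : adj x (qinv_iter x m) = - nprod mul (- x) (nseq m (- x)).
Proof.
elim: m => [|m IHm] /=; first by rewrite adjx0 opprK.
rewrite mulNx opprK -[nprod _ _ _]opprK -IHm /adj addrA subrr add0r.
by rewrite mulDr !mulxN mulA !mulDr mulA !opprD addrCA addrA.
Qed.

Lemma adj_qinvr x : adj x (qinv x) = 0.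
Proof. by rewrite /qinv adj_qinv_iter mul_nilpotent ?oppr0 ?size_nseq. Qed.

Lemma adj_qinvl x : adj (qinv x) x = 0.
Proof.
have qinvK : qinv (qinv x) = x.
  by rewrite -[RHS]adjx0 -(adj_qinvr (qinv x)) adjA adj_qinvr adj0x.
by rewrite -{2}qinvK adj_qinvr.
Qed.

Lemma adj_qinvK x y : adj (qinv x) (adj x y) = y.
Proof. by rewrite adjA adj_qinvl adj0x. Qed.

Lemma qinv_closed P x : additive_subgroup P ->
  (forall y, P y -> P (mul x y)) -> P x -> P (qinv x).
Proof.
move=> P_sub PxM Px; rewrite /qinv; elim: n => [|m IHm] /=; first exact: subgroup0.
by apply: subgroupB => //; [exact: subgroupN | exact: PxM].
Qed.

Section Decomposition.
Variables S I : N -> Prop.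
Hypothesis S_subring : subring mul S.
Hypothesis I_ideal : two_sided_ideal mul I.
Hypothesis SI_trivial : forall x, S x -> I x -> x = 0.
Hypothesis SI_span : forall x, exists s i, [/\ S s, I i & x = s + i].

Let S_sub := proj1 S_subring.
Let I_sub := ideal_subgroup I_ideal.
Let S0 : S 0 := subgroup0 S_sub.
Let I0 : I 0 := subgroup0 I_sub.

Lemma adj_subring a b : S a -> S b -> S (adj a b).
Proof. by move=> Sa Sb; do 2?apply: (subgroupD S_sub) => //; apply: (proj2 S_subring). Qed.

Lemma adj_ideal a b : I a -> I b -> I (adj a b).
Proof. by move=> Ia Ib; do 2?apply: (subgroupD I_sub) => //; exact: idealMr I_ideal Ia. Qed.

Lemma qinv_subring s : S s -> S (qinv s).
Proof. by move=> Ss; apply: qinv_closed => // y; apply: (proj2 S_subring). Qed.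

Lemma qinv_ideal i : I i -> I (qinv i).
Proof. by move=> Ii; apply: qinv_closed => // y _; exact: idealMr I_ideal Ii. Qed.

Lemma adjBl_ideal x i : I i -> I (adj x i - x).
Proof.
move=> Ii; rewrite /adj addrAC [x + i]addrC addrK.
by apply: (subgroupD I_sub) => //; exact: idealMl I_ideal Ii.
Qed.

Lemma adj_decomp_eq_mod_ideal s s' i i' : S s -> S s' -> I i -> I i' ->
  I (adj s i - adj s' i') -> s = s'.
Proof.
move=> Ss Ss' Ii Ii' Idiff; apply/eqP; rewrite -subr_eq0; apply/eqP/SI_trivial.
  exact: subgroupB S_sub Ss Ss'.
have -> : s - s' = (adj s i - adj s' i') - (adj s i - s) + (adj s' i' - s').
  set A := adj s i; set A' := adj s' i'.
  by rewrite opprB [A - A' + _]addrC [s - A + _]addrA subrK [RHS]addrA subrK.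
by apply: (subgroupD I_sub); [apply: (subgroupB I_sub) => // |]; apply: adjBl_ideal.
Qed.

Lemma adj_decomp_inj s s' i i' : S s -> S s' -> I i -> I i' ->
  adj s i = adj s' i' -> s = s' /\ i = i'.
Proof.
move=> Ss Ss' Ii Ii' E; have Es : s = s'.
  by apply: (adj_decomp_eq_mod_ideal Ss Ss' Ii Ii'); rewrite E subrr; exact: subgroup0.
by split=> //; rewrite -(adj_qinvK s i) E Es adj_qinvK.
Qed.

Lemma adj_decomp_exists x : exists p : N * N, [/\ S p.1, I p.2 & x = adj p.1 p.2].
Proof.
have [s [i [Ss Ii ->]]] := SI_span x.
exists (s, adj (qinv s) (s + i)); split=> //=; last by rewrite adjA adj_qinvr adj0x.
by rewrite adjDr adj_qinvl add0r; apply: adjBl_ideal.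
Qed.

Lemma adj_decomp_unique x : exists! p : N * N, [/\ S p.1, I p.2 & x = adj p.1 p.2].
Proof.
have [[s i] [/= Ss Ii Ex]] := adj_decomp_exists x.
exists (s, i); split=> // -[s' i'] [/= Ss' Ii' Ex'].
by have [-> ->] := adj_decomp_inj Ss Ss' Ii Ii' (etrans (esym Ex) Ex').
Qed.

Local Notation sdecomp := (sdecomp mul S I).
Local Notation bullet := (bullet mul S I).

Lemma sdecompP x :
  [/\ S (sdecomp x).1, I (sdecomp x).2 & x = adj (sdecomp x).1 (sdecomp x).2].
Proof. exact: epsilon_spec (inhabits (0, 0)) _ (adj_decomp_exists x). Qed.

Lemma sdecompE s i : S s -> I i -> sdecomp (adj s i) = (s, i).
Proof.
move=> Ss Ii; have [Ss' Ii' E] := sdecompP (adj s i).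
have [E1 E2] := adj_decomp_inj Ss Ss' Ii Ii' E.
by rewrite [LHS]surjective_pairing -E1 -E2.
Qed.

Lemma bulletE s i y : S s -> I i -> bullet (adj s i) y = adj (adj s y) i.
Proof. by move=> Ss Ii; rewrite /Defs.bullet sdecompE. Qed.

Lemma bullet_left_brace : left_brace bullet.
Proof.
split.
- move=> x y z.
  have [[s i] [/= Ss Ii ->]] := adj_decomp_exists x.
  have [[t j] [/= St Ij ->]] := adj_decomp_exists y.
  have Est : bullet (adj s i) (adj t j) = adj (adj s t) (adj j i).
    by rewrite bulletE // !adjA.
  rewrite Est !bulletE //; [by rewrite !adjA | exact: adj_subring | exact: adj_ideal].
- exists 0; split=> x.
    have [[s i] [/= Ss Ii ->]] := adj_decomp_exists x.
    by rewrite -{1}(adj0x 0) !bulletE // !adjx0 !adj0x.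
  have [[s i] [/= Ss Ii ->]] := adj_decomp_exists x.
  exists (adj (qinv s) (qinv i)).
  have Sq := qinv_subring Ss; have Iq := qinv_ideal Ii.
  by rewrite !bulletE // !adjA adj_qinvr adj_qinvl !adj0x adj_qinvr adj_qinvl.
- move=> x y z; have [[s i] [/= Ss Ii ->]] := adj_decomp_exists x.
  by rewrite !bulletE // adjDr adjDBl.
Qed.

Variable J : N -> Prop.
Hypothesis J_ideal : two_sided_ideal mul J.
Hypothesis J_in_I : forall j, J j -> I j.

Lemma bullet_compat : compatible J bullet.
Proof.
have J0 : J 0 := subgroup0 (ideal_subgroup J_ideal).
move=> a a' z z' Ja Jz.
have [[s i] [/= Ss Ii Ea]] := adj_decomp_exists a.
have [[s' i'] [/= Ss' Ii' Ea']] := adj_decomp_exists a'.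
have Es : s = s'.
  by apply: (adj_decomp_eq_mod_ideal Ss Ss' Ii Ii'); rewrite -Ea -Ea'; exact: J_in_I.
subst a a' s'.
have Ji : J (i - i').
  rewrite -(adj_qinvK s i) -(adj_qinvK s i').
  by apply: (adj_compat J_ideal); rewrite ?subrr.
rewrite !bulletE //; apply: (adj_compat J_ideal) => //.
by apply: (adj_compat J_ideal); rewrite ?subrr.
Qed.

End Decomposition.

End QuasiInverse.

End AdjointOperation.

Section BraceSolution.
Variables (N : zmodType) (op : N -> N -> N).
Hypothesis op_brace : left_brace op.
Local Notation ginv := (ginv op).
Local Notation sigma := (ybe_sigma op).
Local Notation tau := (ybe_tau op).

Let opA x y z : op x (op y z) = op (op x y) z.
Proof. by case: op_brace. Qed.

Let opDr x y z : op x (y + z) = op x y + op x z - x.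
Proof. by case: op_brace. Qed.

Lemma brace_opx0 x : op x 0 = x.
Proof.
apply/eqP; rewrite -subr_eq0; apply/eqP/(@addrI _ (op x 0)).
by rewrite addr0 addrA -opDr addr0.
Qed.

Lemma left_neutral_eq0 e : (forall x, op e x = x) -> e = 0.
Proof. by move=> e_neutral; rewrite -[LHS]brace_opx0 e_neutral. Qed.

Lemma brace_op0x x : op 0 x = x.
Proof.
case: op_brace => _ [e [e_unit _]] _.
by rewrite -(@left_neutral_eq0 e) => [|y]; apply: (e_unit _).1.
Qed.

Lemma ginvP x : op x (ginv x) = 0 /\ op (ginv x) x = 0.
Proof.
case: op_brace => _ [e [e_unit e_inv]] _.
apply: (epsilon_spec (inhabits 0) (fun y => op x y = 0 /\ op y x = 0)).
by rewrite -(@left_neutral_eq0 e) => [|y]; [apply: e_inv | apply: (e_unit _).1].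
Qed.

Lemma ginv_unique x y : op y x = 0 -> ginv x = y.
Proof. by move=> yx0; rewrite -[RHS]brace_opx0 -(ginvP x).1 opA yx0 brace_op0x. Qed.

Lemma brace_opB a u v : op a (u - v) = op a u - op a v + a.
Proof. by rewrite -{2}(subrK v u) opDr addrAC subrK addrK. Qed.

Lemma ybe_mapK : involutive (ybe_map op).
Proof.
have sigmaK x y : sigma (sigma x y) (tau y x) = x.
  by rewrite /ybe_sigma /ybe_tau brace_opB opA (ginvP _).1 brace_op0x subr0 addrK.
have tauE y x : tau y x = op (ginv (sigma x y)) x - ginv (sigma x y) by [].
case=> x y; rewrite /ybe_map /= sigmaK; congr pair.
by rewrite tauE sigmaK /ybe_sigma brace_opB opA (ginvP x).2 brace_op0x subr0 addrK.
Qed.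

Section Compatible.
Variable J : N -> Prop.
Hypothesis J_sub : additive_subgroup J.
Hypothesis op_compat : compatible J op.
Let J0 : J 0 := subgroup0 J_sub.

Lemma ginv_compat a b : J (a - b) -> J (ginv a - ginv b).
Proof.
move=> Jab.
have -> : ginv a - ginv b = op (op (ginv a) b) (ginv b) - op (op (ginv a) a) (ginv b).
  by rewrite -opA (ginvP b).1 brace_opx0 (ginvP a).2 brace_op0x.
apply: op_compat; rewrite ?subrr //.
by apply: op_compat; rewrite ?subrr // -opprB; exact: subgroupN.
Qed.

Lemma ybe_sigma_compat x x' y y' :
  J (x - x') -> J (y - y') -> J (sigma x y - sigma x' y').
Proof.
move=> Jx Jy; rewrite /ybe_sigma opprD addrACA -opprD.
exact: subgroupB J_sub (op_compat Jx Jy) Jx.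
Qed.

Lemma ybe_tau_compat y y' x x' :
  J (y - y') -> J (x - x') -> J (tau y x - tau y' x').
Proof.
move=> Jy Jx; have Jg := ginv_compat (ybe_sigma_compat Jx Jy).
rewrite /ybe_tau opprD addrACA -opprD.
exact: subgroupB J_sub (op_compat Jg Jx) Jg.
Qed.

Section Reflection.
Variables (X : N -> Prop) (k : N -> N).
Hypothesis X_closed : forall x y, X x -> X y -> X (sigma x y) /\ X (tau y x).
Hypothesis k_X : forall x, X x -> X (k x).
Hypothesis k_invariant : forall x j, X x -> J j -> X (x + j) -> k (x + j) = k x.
Hypothesis k_mod : forall x, X x -> J (k x - x).
Hypothesis k_lambda_fixed : forall x b, X x -> op b (k x) = k x + b.

Lemma sigma_k a z : X z -> sigma a (k z) = k z.
Proof. by move=> Xz; rewrite /ybe_sigma k_lambda_fixed // addrK. Qed.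

Lemma ginv_k z : X z -> ginv (k z) = - k z.
Proof. by move=> Xz; apply: ginv_unique; rewrite k_lambda_fixed // subrr. Qed.

Lemma tau_k z w : X z -> X w -> tau (k z) (k w) = k w.
Proof. by move=> Xz Xw; rewrite /ybe_tau sigma_k // ginv_k // k_lambda_fixed // addrK. Qed.

Lemma k_eq_mod z w : X z -> X w -> J (w - z) -> k w = k z.
Proof. by move=> Xz Xw Jwz; rewrite -(subrKC z w) k_invariant // subrKC. Qed.

Theorem lambda_fixed_reflection : reflection (ybe_map op) X k.
Proof.
move=> x y Xx Xy; rewrite /ybe_map /idk /=.
have [Xs Xt] := X_closed Xx Xy.
have Xt' : X (tau (k y) x) := (X_closed Xx (k_X Xy)).2.
have tauK : tau (tau y x) (sigma x y) = y := congr1 snd (ybe_mapK (x, y)).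
rewrite (sigma_k x Xy) (sigma_k _ Xt') (sigma_k _ Xt) (tau_k Xt' Xy); congr pair.
  by apply: k_eq_mod => //; apply: ybe_tau_compat; [exact: k_mod | rewrite subrr].
have Xt'' : X (tau (k (tau y x)) (sigma x y)) := (X_closed Xs (k_X Xt)).2.
symmetry; apply: k_eq_mod => //; rewrite -[X in _ - X]tauK.
by apply: ybe_tau_compat; [exact: k_mod | rewrite subrr].
Qed.

End Reflection.

End Compatible.

End BraceSolution.

Unset Implicit Arguments. Set Strict Implicit.

Theorem mainTheorem10 (N : zmodType) (mul : N -> N -> N)
    (S I X J : N -> Prop) (k : N -> N) :
  nilpotent_ring mul ->
  subring mul S ->
  two_sided_ideal mul I ->
  (forall x, S x -> I x -> x = 0) ->
  (forall x, exists s i, [/\ S s, I i & x = s + i]) ->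
  ybe_solution (ybe_map (bullet mul S I)) X ->
  two_sided_ideal mul J ->
  (forall j, J j -> I j /\ X j) ->
  (forall x, X x -> X (k x)) ->
  (forall x j, X x -> J j -> X (x + j) -> k (x + j) = k x) ->
  (forall x, X x -> J (k x - x)) ->
  (forall x b, X x -> bullet mul S I b (k x) = k x + b) ->
  (forall x, exists! p : N * N, [/\ S p.1, I p.2 & x = adj mul p.1 p.2]) /\
  left_brace (bullet mul S I) /\
  reflection (ybe_map (bullet mul S I)) X k.
Proof.
move=> [mulA mulDr mulDl [n nilp]] S_subring I_ideal SI_trivial SI_span [X_closed _]
  J_ideal J_in_IX k_X k_invariant k_mod k_lambda_fixed.
have J_in_I j : J j -> I j by case/J_in_IX.
have brace : left_brace (bullet mul S I).
  by apply: (bullet_left_brace mulA mulDr mulDl nilp).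
have compat : compatible J (bullet mul S I).
  by apply: (bullet_compat mulA mulDr mulDl nilp).
split; first by apply: (adj_decomp_unique mulA mulDr mulDl nilp).
split=> //.
by apply: (lambda_fixed_reflection brace (ideal_subgroup J_ideal) compat).
Qed.
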